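(* (Transversality Mapping Theorem.) Let $E:\mathbb{R}^{N_x}\to\mathbb{R}$ be twice differentiable, and consider the optimal control problem (R): minimize $y(t_f)$ over state trajectories $(y(\cdot),\boldsymbol x(\cdot),\boldsymbol v(\cdot))$ with unconstrained controls $\boldsymbol u(t)\in\mathbb{R}^{N_x}$ and free final time $t_f$, subject to $\dot{\boldsymbol x}=\boldsymbol v$, $\dot{\boldsymbol v}=\boldsymbol u$, $\dot y=\nabla E(\boldsymbol x)\cdot\boldsymbol v$, $(\boldsymbol x(t_0),t_0)=(\boldsymbol x^0,t^0)$, $y(t_0)=E(\boldsymbol x^0)$, $\boldsymbol v(t_f)=\mathbf 0$, with $t_f$, $\boldsymbol x(t_f)$, $\boldsymbol v(t_0)$ free. Then the first-order necessary condition for the static problem $\min_{\boldsymbol x_f\in\mathbb{R}^{N_x}}E(\boldsymbol x_f)$ is embedded in the terminal transversality condition of (R): along any extremal of (R), the terminal transversality condition $\boldsymbol\lambda_x(t_f)=\mathbf 0$ implies $\nabla E(\boldsymbol x_f)=\mathbf 0$, where $\boldsymbol x_f=\boldsymbol x(t_f)$.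
   Context: The Pontryagin Hamiltonian of (R) is $H=\boldsymbol\lambda_x\cdot\boldsymbol v+\boldsymbol\lambda_v\cdot\boldsymbol u+\lambda_y\,\nabla E(\boldsymbol x)\cdot\boldsymbol v$. An extremal is a state–control trajectory together with costates $(\boldsymbol\lambda_x,\boldsymbol\lambda_v,\lambda_y)$ and a cost multiplier $\nu_0\ge0$, not all multipliers vanishing, satisfying the adjoint equations $\dot{\boldsymbol\lambda}_x=-\lambda_y\nabla^2E(\boldsymbol x)\boldsymbol v$, $\dot{\boldsymbol\lambda}_v=-\boldsymbol\lambda_x-\lambda_y\nabla E(\boldsymbol x)$, $\dot\lambda_y=0$; the transversality conditions $\boldsymbol\lambda_x(t_f)=\mathbf 0$, $\boldsymbol\lambda_v(t_0)=\mathbf 0$, $\lambda_y(t_f)=\nu_0$; and the Hamiltonian minimization condition ($\boldsymbol u(t)$ minimizes $H$ over $\mathbb{R}^{N_x}$, which for this $H$ linear in an unconstrained $\boldsymbol u$ forces $\partial_{\boldsymbol u}H=\boldsymbol\lambda_v(t)=\mathbf 0$ for all $t\in[t_0,t_f]$). *)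

From HB Require Import structures.
From mathcomp Require Import all_boot all_order all_algebra.
From mathcomp Require Import all_classical all_reals all_analysis.
Set Implicit Arguments. Unset Strict Implicit. Unset Printing Implicit Defensive.
Import Order.TTheory GRing.Theory Num.Theory.
Import numFieldNormedType.Exports.
Local Open Scope ring_scope.

Definition dotv {R : realType} {N : nat} (a b : 'rV[R]_N) : R :=
  \sum_(i < N) a 0 i * b 0 i.

Definition grad {R : realType} {N : nat} (E : 'rV[R]_N -> R) (x : 'rV[R]_N)
  : 'rV[R]_N := \row_(i < N) ('D_(delta_mx 0 i) E x).

(* Hessian-vector product  (nabla^2 E)(x) w  = directional derivative of grad E along w. *)
Definition hessv {R : realType} {N : nat} (E : 'rV[R]_N -> R) (x w : 'rV[R]_N)
  : 'rV[R]_N := 'D_w (grad E) x.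

Definition twice_differentiable {R : realType} {N : nat} (E : 'rV[R]_N -> R) : Prop :=
  forall x, differentiable E x /\ differentiable (grad E) x.

Definition hamiltonian {R : realType} {N : nat} (E : 'rV[R]_N -> R)
  (lx lv : 'rV[R]_N) (ly : R) (x v u : 'rV[R]_N) : R :=
  dotv lx v + dotv lv u + ly * dotv (grad E x) v.

(* Since H is affine in the unconstrained control u, minimality of H at u forces
   lambda_v = 0 on [t0, tf], so the adjoint equation for lambda_v collapses to
   lambda_x = - lambda_y grad E(x).  As lambda_y is constant, equal to nu0, the
   terminal condition lambda_x(tf) = 0 becomes nu0 grad E(x_f) = 0.  If nu0
   were 0 then lambda_x, lambda_v and lambda_y would all vanish, which
   nontriviality excludes; hence grad E(x_f) = 0. *)
From HB Require Import structures.
From mathcomp Require Import all_boot all_order all_algebra.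
From mathcomp Require Import all_classical all_reals all_analysis.
From mathcomp Require Import lra.
Set Implicit Arguments. Unset Strict Implicit. Unset Printing Implicit Defensive.
Import Order.TTheory GRing.Theory Num.Theory.
Import numFieldNormedType.Exports.
Local Open Scope ring_scope.
Local Open Scope classical_set_scope.

Section IntervalCalculus.
Variable R : realType.

Lemma derive1_eq0_on_itv (V : normedModType R) (f : R -> V) (a b t : R) :
  a < b -> a <= t <= b -> (forall s, a <= s <= b -> f s = 0) ->
  derivable f t 1 -> derive1 f t = 0.
Proof.
move=> ab /andP[a_le_t tb] f0 df.
have ft : f t = 0 by apply: f0; rewrite a_le_t tb.
rewrite derive1E /derive.
(* The derivative is also the one-sided limit from a side of [t] on which [f]
   vanishes. *)
have [t_lt_b | b_le_t] := ltP t b.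
- rewrite (cvg_at_rightE _ _ df).
  apply: (@lim_near_cst _ _ _ (at_right 0)) => //.
  near=> h.
  have h_gt0 : 0 < h by near: h; exact: nbhs_right_gt.
  have h_lt : h < b - t by near: h; apply: nbhs_right_lt; rewrite subr_gt0.
  by rewrite /= ft subr0 f0 ?scaler0 // [_ *: _]mulr1; apply/andP; split; lra.
- have a_lt_t : a < t by rewrite (lt_le_trans ab).
  rewrite (cvg_at_leftE _ _ df).
  apply: (@lim_near_cst _ _ _ (at_left 0)) => //.
  near=> h.
  have h_lt0 : h < 0 by near: h; exact: nbhs_left_lt.
  have h_gt : a - t < h by near: h; apply: nbhs_left_gt; rewrite subr_lt0.
  by rewrite /= ft subr0 f0 ?scaler0 // [_ *: _]mulr1; apply/andP; split; lra.
Unshelve. all: by end_near.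
Qed.

Lemma derive1_eq0_is_cst_itv (f : R -> R) (a b : R) :
  (forall s, a <= s <= b -> derivable f s 1 /\ derive1 f s = 0) ->
  forall t, a <= t <= b -> f t = f b.
Proof.
move=> df t /andP[a_le_t tb].
have in_ab s : t <= s <= b -> a <= s <= b.
  by case/andP=> ts ->; rewrite (le_trans a_le_t ts).
have is_derive0 s : s \in `]t, b[%R -> is_derive s 1 f 0.
  rewrite in_itv /= => /andP[ts sb].
  have sI : t <= s <= b by rewrite (ltW ts) (ltW sb).
  have [df_s <-] := df s (in_ab s sI).
  by apply: DeriveDef; rewrite ?derive1E.
have fC : {within `[t, b], continuous f}.
  apply: derivable_within_continuous => s; rewrite in_itv /= => /in_ab.
  by case/df.
have [c _] := MVT_segment tb is_derive0 fC.
by rewrite mul0r => /eqP; rewrite subr_eq0 => /eqP.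
Qed.

End IntervalCalculus.

Lemma dotvBr (R : realType) (N : nat) (a b c : 'rV[R]_N) :
  dotv a (b - c) = dotv a b - dotv a c.
Proof. by rewrite /dotv -sumrB; apply: eq_bigr => i _; rewrite !mxE mulrBr. Qed.

Lemma dotvv_le0 (R : realType) (N : nat) (a : 'rV[R]_N) :
  (dotv a a <= 0) = (a == 0).
Proof.
have sq_ge0 i : 0 <= a 0 i * a 0 i by rewrite -expr2 sqr_ge0.
apply/idP/eqP => [aa_le0 | ->]; last first.
  by rewrite /dotv big1 // => i _; rewrite mxE mulr0.
have aa0 : \sum_(i < N) a 0 i * a 0 i = 0.
  by apply/eqP; rewrite eq_le aa_le0 sumr_ge0.
apply/rowP => j; apply/eqP; rewrite mxE -[_ == 0]orbb -mulf_eq0.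
by rewrite (psumr_eq0P (fun i _ => sq_ge0 i) aa0).
Qed.

Lemma hamiltonian_min_costate_v_eq0 (R : realType) (N : nat) (E : 'rV[R]_N -> R)
    (lx lv : 'rV[R]_N) (ly : R) (x v u : 'rV[R]_N) :
  (forall w, hamiltonian E lx lv ly x v u <= hamiltonian E lx lv ly x v w) ->
  lv = 0.
Proof.
(* The control [u - lv] would lower the Hamiltonian by [dotv lv lv]. *)
move/(_ (u - lv)); rewrite /hamiltonian lerD2r lerD2l dotvBr.
by rewrite lerDl oppr_ge0 dotvv_le0 => /eqP.
Qed.

Theorem theorem2 (R : realType) (N : nat) (E : 'rV[R]_N -> R)
  (x0 : 'rV[R]_N) (t0 tf : R)
  (y : R -> R) (x v u : R -> 'rV[R]_N)
  (lx lv : R -> 'rV[R]_N) (ly : R -> R) (nu0 : R) :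
  twice_differentiable E ->
  t0 < tf ->
  (* state equations of (R) on [t0, tf] *)
  (forall t, t0 <= t <= tf ->
     [/\ derivable x t 1, derivable v t 1 & derivable y t 1] /\
     [/\ derive1 x t = v t, derive1 v t = u t &
         derive1 y t = dotv (grad E (x t)) (v t)]) ->
  (* boundary conditions *)
  x t0 = x0 -> y t0 = E x0 -> v tf = 0 ->
  (* cost multiplier *)
  0 <= nu0 ->
  (* nontriviality of the multipliers *)
  ~ (nu0 = 0 /\ forall t, t0 <= t <= tf ->
       [/\ lx t = 0, lv t = 0 & ly t = 0]) ->
  (* adjoint equations *)
  (forall t, t0 <= t <= tf ->
     [/\ derivable lx t 1, derivable lv t 1 & derivable ly t 1] /\
     [/\ derive1 lx t = - (ly t *: hessv E (x t) (v t)),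
         derive1 lv t = - lx t - ly t *: grad E (x t) &
         derive1 ly t = 0]) ->
  (* transversality conditions *)
  lx tf = 0 -> lv t0 = 0 -> ly tf = nu0 ->
  (* Hamiltonian minimization over unconstrained controls *)
  (forall t, t0 <= t <= tf -> forall w : 'rV[R]_N,
     hamiltonian E (lx t) (lv t) (ly t) (x t) (v t) (u t)
     <= hamiltonian E (lx t) (lv t) (ly t) (x t) (v t) w) ->
  grad E (x tf) = 0.
Proof.
move=> _ t0_lt_tf _ _ _ _ _ nontrivial adjoint lx_tf _ ly_tf min_H.
have lv0 t : t0 <= t <= tf -> lv t = 0.
  by move/min_H/hamiltonian_min_costate_v_eq0.
have lxE t : t0 <= t <= tf -> lx t = - (ly t *: grad E (x t)).
  move=> tI; have [[_ dlv _] [_ lvE _]] := adjoint t tI.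
  move: (derive1_eq0_on_itv t0_lt_tf tI lv0 dlv).
  by rewrite lvE => /eqP; rewrite subr_eq0 eqr_oppLR => /eqP.
have lyE t : t0 <= t <= tf -> ly t = nu0.
  move=> tI; rewrite -ly_tf; apply: derive1_eq0_is_cst_itv tI => s sI.
  by have [[_ _ ?] [_ _ ?]] := adjoint s sI.
have tf_in : t0 <= tf <= tf by rewrite lexx andbT ltW.
have nu0_grad : nu0 *: grad E (x tf) = 0.
  by rewrite -[LHS]opprK -(lyE _ tf_in) -lxE // lx_tf oppr0.
move/eqP: nu0_grad; rewrite scaler_eq0 => /orP[/eqP nu0_0 | /eqP //].
case: nontrivial; split=> // t tI.
by rewrite lxE // lv0 // lyE // nu0_0 scale0r oppr0.
Qed.
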